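(* Let $x>0$ and $p\in\mathbb{R}$. (i) If $0\le p\le \frac12$, then $\hat{G}_p(x,1)\ge K(x)^{-p(1-p)}W_p(x,1)$. (ii) If $p\le 0$ or $p\ge 1$, then $\hat{G}_p(x,1)\le K(x)^{-p(1-p)}W_p(x,1)$.
   Context: For $x>0$, $x\neq1$ and $p\neq 0$: $\hat{G}_p(x,1)=\frac{p\,x^{p/2}(x-1)}{x^p-1}$, with $\hat G_p(1,1)=1$ and $\hat{G}_0(x,1)=\frac{x-1}{\log x}$ (limiting value). $K(x)=\frac{(x+1)^2}{4x}$. The Wigner--Yanase--Dyson function for $p\in\mathbb{R}\setminus\{0,1\}$, $x\ne1$ is $W_p(x,1)=\frac{p(1-p)(x-1)^2}{(x^p-1)(x^{1-p}-1)}$, with $W_p(1,1)=1$ and $W_0(x,1)=W_1(x,1)=\frac{x-1}{\log x}$ (limiting value). *)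

From Stdlib Require Import Reals.
Open Scope R_scope.

Definition Ghat (p x : R) : R :=
  if Req_EM_T x 1 then 1
  else if Req_EM_T p 0 then (x - 1) / ln x
  else p * Rpower x (p / 2) * (x - 1) / (Rpower x p - 1).

Definition Kfun (x : R) : R := (x + 1) ^ 2 / (4 * x).

Definition WYD (p x : R) : R :=
  if Req_EM_T x 1 then 1
  else if Req_EM_T p 0 then (x - 1) / ln x
  else if Req_EM_T p 1 then (x - 1) / ln x
  else p * (1 - p) * (x - 1) ^ 2 / ((Rpower x p - 1) * (Rpower x (1 - p) - 1)).

From Stdlib Require Import Reals Lra.
From Coquelicot Require Import Coquelicot.
Open Scope R_scope.

(* Put x = exp (2 t) and q = 1 - p.  Then Ghat_p(x,1) = sinh (q t) / (q sinh t) * W_p(x,1)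
   and K(x)^(-p(1-p)) = cosh(t)^(2 q (q - 1)), so both parts compare the logarithm of that
   ratio with 2 q (q - 1) ln cosh t.  As a function of q, ln sinh (q t) - ln q has derivative
   t L(q t), where L = coth - 1/id is the Langevin function; L is increasing with 0 <= L <= tanh.
   Convexity in q and t L(t) <= ln cosh t give (i) from the tangent at q = 1; for q >= 1 the
   bounds tanh (q t) <= q tanh t and t tanh t <= 2 ln cosh t give (ii); q < 0 reduces to -q. *)

Lemma nondecreasing_of_derive_nonneg (f df : R -> R) (a b : R) : a <= b ->
  (forall x, a <= x <= b -> is_derive f x (df x)) ->
  (forall x, a <= x <= b -> 0 <= df x) -> f a <= f b.
Proof.
  intros Hab Hd Hpos.
  destruct (Req_dec a b) as [->|Hne]; [lra|].
  destruct (MVT_gen f a b df) as [c [Hc Hmvt]];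
    rewrite Rmin_left, Rmax_right in * by lra.
  - intros x Hx; apply Hd; lra.
  - intros x Hx. apply continuity_pt_filterlim, (@ex_derive_continuous R_AbsRing R_NormedModule).
    exists (df x); apply Hd; lra.
  - assert (0 <= df c * (b - a)) by (apply Rmult_le_pos; [apply Hpos|]; lra).
    lra.
Qed.

Lemma nonincreasing_of_derive_nonpos (f df : R -> R) (a b : R) : a <= b ->
  (forall x, a <= x <= b -> is_derive f x (df x)) ->
  (forall x, a <= x <= b -> df x <= 0) -> f b <= f a.
Proof.
  intros Hab Hd Hneg.
  enough (- f a <= - f b) by lra.
  apply (nondecreasing_of_derive_nonneg (fun x => - f x) (fun x => - df x) a b Hab).
  - intros x Hx; apply (is_derive_opp f), Hd, Hx.
  - intros x Hx; specialize (Hneg x Hx); lra.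
Qed.

Lemma exp_le_exp x y : x <= y -> exp x <= exp y.
Proof. intros [Hlt | ->]; [left; apply exp_increasing, Hlt | lra]. Qed.

Lemma cosh_pos u : 0 < cosh u.
Proof. unfold cosh. pose proof (exp_pos u). pose proof (exp_pos (- u)). lra. Qed.

Lemma cosh_ge_1 u : 1 <= cosh u.
Proof.
  unfold cosh. rewrite exp_Ropp. pose proof (exp_pos u) as He.
  assert (Hsq : (exp u + / exp u) / 2 - 1 = (exp u - 1) ^ 2 / (2 * exp u)) by (field; lra).
  assert (0 <= (exp u - 1) ^ 2 / (2 * exp u)) by (apply Rle_mult_inv_pos; [apply pow2_ge_0 | lra]).
  lra.
Qed.

Lemma ln_cosh_nonneg u : 0 <= ln (cosh u).
Proof.
  rewrite <- ln_1. destruct (cosh_ge_1 u) as [Hlt | <-]; [|lra].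
  left; apply ln_increasing; lra.
Qed.

Lemma cosh_sq_sub_sinh_sq u : cosh u ^ 2 - sinh u ^ 2 = 1.
Proof. unfold cosh, sinh. rewrite exp_Ropp. pose proof (exp_pos u). field. lra. Qed.

Lemma sinh_pos u : 0 < u -> 0 < sinh u.
Proof. intros Hu. rewrite <- sinh_0. apply sinh_lt, Hu. Qed.

Lemma sinh_opp u : sinh (- u) = - sinh u.
Proof. unfold sinh. rewrite Ropp_involutive. lra. Qed.

Lemma cosh_opp u : cosh (- u) = cosh u.
Proof. unfold cosh. rewrite Ropp_involutive. lra. Qed.

Lemma is_derive_cosh u : is_derive cosh u (sinh u).
Proof. apply is_derive_Reals, derivable_pt_lim_cosh. Qed.

Lemma id_le_sinh u : 0 <= u -> u <= sinh u.
Proof.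
  intros Hu.
  enough (u - sinh u <= 0 - sinh 0) by (rewrite sinh_0 in *; lra).
  apply (nonincreasing_of_derive_nonpos (fun u => u - sinh u) (fun u => 1 - cosh u) 0 u Hu).
  - intros x _. unfold sinh, cosh. auto_derive; [easy | lra].
  - intros x _. pose proof (cosh_ge_1 x). lra.
Qed.

Lemma sinh_le_id_mul_cosh u : 0 <= u -> sinh u <= u * cosh u.
Proof.
  intros Hu.
  enough (0 * cosh 0 - sinh 0 <= u * cosh u - sinh u) by (rewrite sinh_0 in *; lra).
  apply (nondecreasing_of_derive_nonneg (fun u => u * cosh u - sinh u) (fun u => u * sinh u) 0 u Hu).
  - intros x _. unfold sinh, cosh. auto_derive; [easy | lra].
  - intros x Hx. apply Rmult_le_pos; [lra|].
    destruct (Req_dec x 0) as [->|]; [rewrite sinh_0; lra | left; apply sinh_pos; lra].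
Qed.

Lemma cosh_sub_1_le u : 0 <= u -> cosh u - 1 <= u * sinh u.
Proof.
  intros Hu.
  enough (0 * sinh 0 - cosh 0 <= u * sinh u - cosh u) by (rewrite cosh_0 in *; lra).
  apply (nondecreasing_of_derive_nonneg (fun u => u * sinh u - cosh u) (fun u => u * cosh u) 0 u Hu).
  - intros x _. unfold sinh, cosh. auto_derive; [easy | lra].
  - intros x Hx. pose proof (cosh_pos x). nra.
Qed.

Lemma cosh_le_cosh a b : 0 <= a <= b -> cosh a <= cosh b.
Proof.
  intros Hab. apply (nondecreasing_of_derive_nonneg cosh sinh a b); [lra | |].
  - intros x _; apply is_derive_cosh.
  - intros x Hx. pose proof (id_le_sinh x). lra.
Qed.

Lemma one_le_sinh_div u : u <> 0 -> 1 <= sinh u / u.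
Proof.
  intros Hu. destruct (Rlt_or_le 0 u) as [Hpos|Hneg].
  - pose proof (id_le_sinh u). apply Rmult_le_reg_r with u; [lra|].
    unfold Rdiv. rewrite Rmult_assoc, Rinv_l; lra.
  - pose proof (id_le_sinh (- u)). rewrite sinh_opp in *.
    replace (sinh u / u) with (- sinh u / - u) by (field; exact Hu).
    apply Rmult_le_reg_r with (- u); [lra|].
    unfold Rdiv. rewrite Rmult_assoc, Rinv_l; lra.
Qed.

Lemma sinh_neq_0 u : u <> 0 -> sinh u <> 0.
Proof.
  intros Hu Hs. pose proof (one_le_sinh_div u Hu) as H.
  rewrite Hs, Rdiv_0_l in H. lra.
Qed.

Lemma tanh_mul_le q t : 1 <= q -> 0 <= t -> tanh (q * t) <= q * tanh t.
Proof.
  intros Hq Ht. unfold tanh.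
  enough (q * (sinh 0 / cosh 0) - sinh (q * 0) / cosh (q * 0)
          <= q * (sinh t / cosh t) - sinh (q * t) / cosh (q * t))
    by (rewrite Rmult_0_r, sinh_0, Rdiv_0_l in *; lra).
  apply (nondecreasing_of_derive_nonneg
           (fun w => q * (sinh w / cosh w) - sinh (q * w) / cosh (q * w))
           (fun w => q / cosh w ^ 2 - q / cosh (q * w) ^ 2) 0 t Ht).
  - intros w _. pose proof (cosh_pos w). pose proof (cosh_pos (q * w)).
    auto_derive; [repeat split; lra|].
    replace (q / cosh w ^ 2) with (q * (cosh w ^ 2 - sinh w ^ 2) / cosh w ^ 2)
      by (rewrite cosh_sq_sub_sinh_sq; field; lra).
    replace (q / cosh (q * w) ^ 2) with (q * (cosh (q * w) ^ 2 - sinh (q * w) ^ 2) / cosh (q * w) ^ 2)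
      by (rewrite cosh_sq_sub_sinh_sq; field; lra).
    field; lra.
  - intros w Hw. pose proof (cosh_pos w). pose proof (cosh_le_cosh w (q * w) ltac:(nra)).
    assert (/ cosh (q * w) ^ 2 <= / cosh w ^ 2) by (apply Rinv_le_contravar; nra).
    unfold Rdiv. nra.
Qed.

Lemma mul_tanh_le_2_ln_cosh t : 0 <= t -> t * tanh t <= 2 * ln (cosh t).
Proof.
  intros Ht. unfold tanh.
  enough (2 * ln (cosh 0) - 0 * (sinh 0 / cosh 0) <= 2 * ln (cosh t) - t * (sinh t / cosh t))
    by (rewrite cosh_0, ln_1 in *; lra).
  apply (nondecreasing_of_derive_nonneg (fun w => 2 * ln (cosh w) - w * (sinh w / cosh w))
           (fun w => (sinh w * cosh w - w) / cosh w ^ 2) 0 t Ht).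
  - intros w _. pose proof (cosh_pos w).
    auto_derive; [repeat split; lra|].
    replace ((sinh w * cosh w - w) / cosh w ^ 2)
      with ((sinh w * cosh w - w * (cosh w ^ 2 - sinh w ^ 2)) / cosh w ^ 2)
      by (rewrite cosh_sq_sub_sinh_sq; field; lra).
    field; lra.
  - intros w Hw. pose proof (cosh_ge_1 w). pose proof (id_le_sinh w ltac:(lra)).
    apply Rle_mult_inv_pos; nra.
Qed.

Definition langevin (u : R) : R := cosh u / sinh u - 1 / u.

Lemma is_derive_langevin u : 0 < u -> is_derive langevin u (1 / u ^ 2 - 1 / sinh u ^ 2).
Proof.
  intros Hu. pose proof (sinh_pos u Hu). unfold langevin.
  auto_derive; [repeat split; lra|].
  replace (1 / sinh u ^ 2) with ((cosh u ^ 2 - sinh u ^ 2) / sinh u ^ 2)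
    by (rewrite cosh_sq_sub_sinh_sq; reflexivity).
  field; lra.
Qed.

Lemma langevin_le_langevin u v : 0 < u -> u <= v -> langevin u <= langevin v.
Proof.
  intros Hu Huv.
  apply (nondecreasing_of_derive_nonneg langevin (fun w => 1 / w ^ 2 - 1 / sinh w ^ 2) u v Huv).
  - intros w Hw. apply is_derive_langevin. lra.
  - intros w Hw. pose proof (id_le_sinh w ltac:(lra)).
    assert (/ sinh w ^ 2 <= / w ^ 2) by (apply Rinv_le_contravar; nra).
    unfold Rdiv. lra.
Qed.

Lemma langevin_nonneg u : 0 < u -> 0 <= langevin u.
Proof.
  intros Hu. pose proof (sinh_pos u Hu). pose proof (sinh_le_id_mul_cosh u ltac:(lra)).
  replace (langevin u) with ((u * cosh u - sinh u) / (u * sinh u)) by (unfold langevin; field; lra).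
  apply Rle_mult_inv_pos; nra.
Qed.

Lemma langevin_le_tanh u : 0 < u -> langevin u <= tanh u.
Proof.
  intros Hu. pose proof (sinh_pos u Hu). pose proof (cosh_ge_1 u).
  pose proof (id_le_sinh u ltac:(lra)).
  enough (0 <= tanh u - langevin u) by lra.
  replace (tanh u - langevin u)
    with ((sinh u * cosh u - u * (cosh u ^ 2 - sinh u ^ 2)) / (u * sinh u * cosh u))
    by (unfold tanh, langevin; field; lra).
  rewrite cosh_sq_sub_sinh_sq.
  apply Rle_mult_inv_pos; [nra|].
  apply Rmult_lt_0_compat; [nra | lra].
Qed.

Lemma nonneg_of_nondecreasing_linear_bound (f : R -> R) (C t : R) : 0 < t -> 0 <= C ->
  (forall s, 0 < s <= t -> f s <= f t) ->
  (forall s, 0 < s <= t -> - (C * s) <= f s) -> 0 <= f t.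
Proof.
  intros Ht HC Hmono Hbound.
  destruct (Rle_or_lt 0 (f t)) as [Hnn | Hneg]; [exact Hnn | exfalso].
  set (s := Rmin t (- f t / (2 * (C + 1)))).
  assert (Hs : 0 < s) by (apply Rmin_glb_lt; [lra | apply Rdiv_lt_0_compat; lra]).
  assert (Hst : s <= t) by apply Rmin_l.
  assert (Hsf : s * (2 * (C + 1)) <= - f t).
  { apply Rmult_le_reg_r with (/ (2 * (C + 1))); [apply Rinv_0_lt_compat; lra|].
    rewrite Rmult_assoc, Rinv_r by lra. rewrite Rmult_1_r. apply Rmin_r. }
  pose proof (Hmono s (conj Hs Hst)). pose proof (Hbound s (conj Hs Hst)).
  nra.
Qed.

(* [w |-> ln (cosh w) - w * langevin w] increases on (0, t] and tends to 0 at 0+; the linear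
   lower bound stands in for that limit. *)
Lemma mul_langevin_le_ln_cosh t : 0 < t -> t * langevin t <= ln (cosh t).
Proof.
  intros Ht.
  enough (0 <= ln (cosh t) - t * langevin t) by lra.
  apply (nonneg_of_nondecreasing_linear_bound (fun w => ln (cosh w) - w * langevin w) (sinh t) t Ht).
  - left; apply sinh_pos, Ht.
  - intros s Hs.
    apply (nondecreasing_of_derive_nonneg (fun w => ln (cosh w) - w * langevin w)
             (fun w => (w * cosh w - sinh w) / (sinh w ^ 2 * cosh w)) s t); [lra | |].
    + intros w Hw. pose proof (sinh_pos w ltac:(lra)). pose proof (cosh_pos w).
      unfold langevin. auto_derive; [repeat split; lra|].
      replace (w * cosh w - sinh w) with ((w * cosh w - sinh w) * (cosh w ^ 2 - sinh w ^ 2))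
        by (rewrite cosh_sq_sub_sinh_sq; ring).
      field; repeat split; lra.
    + intros w Hw. pose proof (sinh_pos w ltac:(lra)). pose proof (cosh_pos w).
      pose proof (sinh_le_id_mul_cosh w ltac:(lra)).
      apply Rle_mult_inv_pos; [lra|]. apply Rmult_lt_0_compat; nra.
  - intros s Hs. pose proof (sinh_pos s ltac:(lra)). pose proof (ln_cosh_nonneg s).
    pose proof (cosh_sub_1_le s ltac:(lra)).
    assert (sinh s <= sinh t)
      by (destruct (Req_dec s t) as [-> | ]; [lra | left; apply sinh_lt; lra]).
    replace (ln (cosh s) - s * langevin s) with (ln (cosh s) - (s * cosh s / sinh s - 1))
      by (unfold langevin; field; lra).
    assert (s * cosh s / sinh s <= cosh s).
    { pose proof (id_le_sinh s ltac:(lra)). pose proof (cosh_pos s).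
      apply Rmult_le_reg_r with (sinh s); [lra|].
      unfold Rdiv. rewrite Rmult_assoc, Rinv_l by lra. nra. }
    nra.
Qed.

Definition ln_sinh_div (t r : R) : R := ln (sinh (r * t)) - ln r.

Definition sinh_ratio (q t : R) : R := sinh (q * t) / (q * sinh t).

Lemma is_derive_ln_sinh_div t r : 0 < t -> 0 < r ->
  is_derive (ln_sinh_div t) r (t * langevin (r * t)).
Proof.
  intros Ht Hr. pose proof (sinh_pos (r * t) ltac:(nra)).
  unfold ln_sinh_div, langevin. auto_derive; [repeat split; lra|].
  field; repeat split; lra.
Qed.

Lemma sinh_ratio_eq_exp q t : 0 < q -> 0 < t ->
  sinh_ratio q t = exp (ln_sinh_div t q - ln_sinh_div t 1).
Proof.
  intros Hq Ht. pose proof (sinh_pos t Ht). pose proof (sinh_pos (q * t) ltac:(nra)).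
  unfold sinh_ratio, ln_sinh_div, Rminus.
  rewrite Rmult_1_l, ln_1, Ropp_0, Rplus_0_r, !exp_plus, !exp_Ropp, !exp_ln by lra.
  field; lra.
Qed.

Lemma is_derive_ln_sinh_div_sub t r (g : R -> R) (dg : R) : 0 < t -> 0 < r ->
  is_derive g r dg ->
  is_derive (fun r => ln_sinh_div t r - g r) r (t * langevin (r * t) - dg).
Proof.
  intros Ht Hr Hg.
  exact (is_derive_minus (ln_sinh_div t) g r _ _ (is_derive_ln_sinh_div t r Ht Hr) Hg).
Qed.

Lemma Rpower_cosh_le_sinh_ratio_pos q t : 0 < t -> 1 / 2 <= q <= 1 ->
  Rpower (cosh t) (2 * q * (q - 1)) <= sinh_ratio q t.
Proof.
  intros Ht Hq. set (c := t * langevin t).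
  assert (Hconvex : ln_sinh_div t 1 - c * 1 <= ln_sinh_div t q - c * q).
  { apply (nonincreasing_of_derive_nonpos (fun r => ln_sinh_div t r - c * r)
             (fun r => t * langevin (r * t) - c) q 1); [lra | |].
    - intros r Hr. apply is_derive_ln_sinh_div_sub; [lra | lra |].
      auto_derive; [easy | ring].
    - intros r Hr. assert (langevin (r * t) <= langevin t) by (apply langevin_le_langevin; nra).
      unfold c. nra. }
  pose proof (mul_langevin_le_ln_cosh t Ht). pose proof (ln_cosh_nonneg t).
  rewrite sinh_ratio_eq_exp by lra. unfold Rpower. apply exp_le_exp.
  assert (0 <= (1 - q) * (2 * q * ln (cosh t) - c)) by (apply Rmult_le_pos; unfold c in *; nra).
  nra.
Qed.

Lemma sinh_ratio_le_Rpower_cosh_pos q t : 0 < t -> 1 <= q ->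
  sinh_ratio q t <= Rpower (cosh t) (2 * q * (q - 1)).
Proof.
  intros Ht Hq. set (L := ln (cosh t)).
  assert (Hconcave : ln_sinh_div t q - 2 * L * (q * (q - 1)) <= ln_sinh_div t 1 - 2 * L * (1 * (1 - 1))).
  { apply (nonincreasing_of_derive_nonpos (fun r => ln_sinh_div t r - 2 * L * (r * (r - 1)))
             (fun r => t * langevin (r * t) - 2 * L * (2 * r - 1)) 1 q); [lra | |].
    - intros r Hr. apply is_derive_ln_sinh_div_sub; [lra | lra |].
      auto_derive; [easy | ring].
    - intros r Hr.
      pose proof (langevin_le_tanh (r * t) ltac:(nra)).
      pose proof (tanh_mul_le r t ltac:(lra) ltac:(lra)).
      pose proof (mul_tanh_le_2_ln_cosh t ltac:(lra)). pose proof (ln_cosh_nonneg t).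
      unfold L. nra. }
  rewrite sinh_ratio_eq_exp by lra. unfold Rpower. apply exp_le_exp.
  unfold L in *. nra.
Qed.

Lemma sinh_ratio_le_1 r t : 0 < t -> 0 < r <= 1 -> sinh_ratio r t <= 1.
Proof.
  intros Ht Hr.
  assert (ln_sinh_div t r <= ln_sinh_div t 1).
  { apply (nondecreasing_of_derive_nonneg (ln_sinh_div t) (fun r => t * langevin (r * t)) r 1);
      [lra | |].
    - intros x Hx. apply is_derive_ln_sinh_div; lra.
    - intros x Hx. apply Rmult_le_pos; [lra | apply langevin_nonneg; nra]. }
  rewrite sinh_ratio_eq_exp by lra. rewrite <- exp_0 at 2. apply exp_le_exp. lra.
Qed.

Lemma sinh_ratio_opp_l q t : sinh_ratio (- q) t = sinh_ratio q t.
Proof.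
  unfold sinh_ratio. replace (- q * t) with (- (q * t)) by ring.
  replace (- q * sinh t) with (- (q * sinh t)) by ring.
  rewrite sinh_opp. unfold Rdiv. rewrite Rinv_opp. ring.
Qed.

Lemma sinh_ratio_opp_r q t : sinh_ratio q (- t) = sinh_ratio q t.
Proof.
  unfold sinh_ratio. replace (q * - t) with (- (q * t)) by ring.
  rewrite !sinh_opp. replace (q * - sinh t) with (- (q * sinh t)) by ring.
  unfold Rdiv. rewrite Rinv_opp. ring.
Qed.

Lemma Rpower_cosh_le_sinh_ratio q t : t <> 0 -> 1 / 2 <= q <= 1 ->
  Rpower (cosh t) (2 * q * (q - 1)) <= sinh_ratio q t.
Proof.
  intros Ht Hq. destruct (Rlt_or_le 0 t) as [Hpos | Hneg].
  - apply Rpower_cosh_le_sinh_ratio_pos; assumption.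
  - rewrite <- sinh_ratio_opp_r, <- cosh_opp. apply Rpower_cosh_le_sinh_ratio_pos; lra.
Qed.

Lemma sinh_ratio_le_Rpower_cosh q t : t <> 0 -> q < 0 \/ 1 <= q ->
  sinh_ratio q t <= Rpower (cosh t) (2 * q * (q - 1)).
Proof.
  intros Ht Hq.
  assert (Hpos : forall s, 0 < s -> sinh_ratio q s <= Rpower (cosh s) (2 * q * (q - 1))).
  { intros s Hs. destruct Hq as [Hneg | Hge1]; [| apply sinh_ratio_le_Rpower_cosh_pos; assumption].
    rewrite <- sinh_ratio_opp_l. pose proof (cosh_ge_1 s).
    destruct (Rle_or_lt 1 (- q)) as [Hr | Hr].
    - apply Rle_trans with (Rpower (cosh s) (2 * - q * (- q - 1))).
      + apply sinh_ratio_le_Rpower_cosh_pos; assumption.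
      + apply Rle_Rpower; nra.
    - apply Rle_trans with (Rpower (cosh s) 0).
      + rewrite Rpower_O by apply cosh_pos. apply sinh_ratio_le_1; lra.
      + apply Rle_Rpower; nra. }
  destruct (Rlt_or_le 0 t) as [Htpos | Htneg].
  - apply Hpos, Htpos.
  - rewrite <- sinh_ratio_opp_r, <- cosh_opp. apply Hpos. lra.
Qed.

Lemma exp_double_sub_1 u : exp (2 * u) - 1 = 2 * exp u * sinh u.
Proof.
  unfold sinh. replace (2 * u) with (u + u) by ring.
  rewrite exp_plus, exp_Ropp. pose proof (exp_pos u). field. lra.
Qed.

Lemma exp_double_neq_1 t : t <> 0 -> exp (2 * t) <> 1.
Proof. intros Ht He. apply Ht. rewrite <- exp_0 in He. apply exp_inv in He. lra. Qed.

Lemma Rpower_exp u a : Rpower (exp u) a = exp (a * u).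
Proof. unfold Rpower. rewrite ln_exp. reflexivity. Qed.

Lemma Ghat_exp_double p t : t <> 0 -> p <> 0 ->
  Ghat p (exp (2 * t)) = p * exp t * sinh t / sinh (p * t).
Proof.
  intros Ht Hp. unfold Ghat.
  destruct (Req_EM_T (exp (2 * t)) 1) as [He | _]; [now apply exp_double_neq_1 in He|].
  destruct (Req_EM_T p 0) as [Hp0 | _]; [contradiction|].
  rewrite !Rpower_exp. replace (p * (2 * t)) with (2 * (p * t)) by ring.
  replace (p / 2 * (2 * t)) with (p * t) by field.
  rewrite !exp_double_sub_1. pose proof (exp_pos (p * t)).
  pose proof (sinh_neq_0 (p * t) ltac:(now apply Rmult_integral_contrapositive)).
  field. lra.
Qed.

Lemma WYD_exp_double p t : t <> 0 -> p <> 0 -> p <> 1 ->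
  WYD p (exp (2 * t)) = p * (1 - p) * exp t * sinh t ^ 2 / (sinh (p * t) * sinh ((1 - p) * t)).
Proof.
  intros Ht Hp0 Hp1. unfold WYD.
  destruct (Req_EM_T (exp (2 * t)) 1) as [He | _]; [now apply exp_double_neq_1 in He|].
  destruct (Req_EM_T p 0) as [? | _]; [contradiction|].
  destruct (Req_EM_T p 1) as [? | _]; [contradiction|].
  rewrite !Rpower_exp. replace (p * (2 * t)) with (2 * (p * t)) by ring.
  replace ((1 - p) * (2 * t)) with (2 * ((1 - p) * t)) by ring.
  rewrite !exp_double_sub_1.
  replace (exp t) with (exp (p * t) * exp ((1 - p) * t)) by (rewrite <- exp_plus; f_equal; ring).
  pose proof (exp_pos (p * t)). pose proof (exp_pos ((1 - p) * t)).
  pose proof (sinh_neq_0 (p * t) ltac:(apply Rmult_integral_contrapositive; split; assumption)).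
  pose proof (sinh_neq_0 ((1 - p) * t) ltac:(apply Rmult_integral_contrapositive; split; [lra | assumption])).
  field. repeat split; lra.
Qed.

Lemma WYD_1_exp_double t : t <> 0 -> WYD 1 (exp (2 * t)) = exp t * (sinh t / t).
Proof.
  intros Ht. unfold WYD.
  destruct (Req_EM_T (exp (2 * t)) 1) as [He | _]; [now apply exp_double_neq_1 in He|].
  destruct (Req_EM_T 1 0) as [? | _]; [lra|].
  destruct (Req_EM_T 1 1) as [_ | ]; [| contradiction].
  rewrite ln_exp, exp_double_sub_1. field. exact Ht.
Qed.

Lemma Ghat_0_eq_WYD_0 x : Ghat 0 x = WYD 0 x.
Proof.
  unfold Ghat, WYD. destruct (Req_EM_T x 1); [reflexivity|].
  destruct (Req_EM_T 0 0); [reflexivity | contradiction].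
Qed.

Lemma Ghat_1_le_WYD_1_exp_double t : t <> 0 -> Ghat 1 (exp (2 * t)) <= WYD 1 (exp (2 * t)).
Proof.
  intros Ht. rewrite Ghat_exp_double, WYD_1_exp_double by lra.
  pose proof (one_le_sinh_div t Ht). pose proof (exp_pos t). pose proof (sinh_neq_0 t Ht).
  replace (1 * exp t * sinh t / sinh (1 * t)) with (exp t) by (rewrite !Rmult_1_l; field; assumption).
  nra.
Qed.

Lemma Ghat_eq_sinh_ratio_mul_WYD p t : t <> 0 -> p <> 0 -> p <> 1 ->
  Ghat p (exp (2 * t)) = sinh_ratio (1 - p) t * WYD p (exp (2 * t)).
Proof.
  intros Ht Hp0 Hp1. rewrite Ghat_exp_double, WYD_exp_double by assumption.
  unfold sinh_ratio.
  pose proof (sinh_neq_0 t Ht).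
  pose proof (sinh_neq_0 (p * t) ltac:(apply Rmult_integral_contrapositive; split; assumption)).
  pose proof (sinh_neq_0 ((1 - p) * t) ltac:(apply Rmult_integral_contrapositive; split; [lra | assumption])).
  field. repeat split; lra.
Qed.

Lemma WYD_exp_double_pos p t : t <> 0 -> p <> 0 -> p <> 1 -> 0 < WYD p (exp (2 * t)).
Proof.
  intros Ht Hp0 Hp1. rewrite WYD_exp_double by assumption.
  assert (Hpt : p * t <> 0) by (apply Rmult_integral_contrapositive; split; assumption).
  assert (Hqt : (1 - p) * t <> 0) by (apply Rmult_integral_contrapositive; split; [lra | assumption]).
  pose proof (one_le_sinh_div t Ht). pose proof (one_le_sinh_div _ Hpt).
  pose proof (one_le_sinh_div _ Hqt). pose proof (exp_pos t).
  replace (p * (1 - p) * exp t * sinh t ^ 2 / (sinh (p * t) * sinh ((1 - p) * t)))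
    with (exp t * (sinh t / t) ^ 2 / ((sinh (p * t) / (p * t)) * (sinh ((1 - p) * t) / ((1 - p) * t))))
    by (field; repeat split; try lra; apply sinh_neq_0; assumption).
  apply Rdiv_lt_0_compat; [apply Rmult_lt_0_compat; nra | nra].
Qed.

Lemma Kfun_exp_double t : Kfun (exp (2 * t)) = cosh t ^ 2.
Proof.
  unfold Kfun, cosh. replace (2 * t) with (t + t) by ring.
  rewrite exp_plus, exp_Ropp. pose proof (exp_pos t). field. lra.
Qed.

Lemma Rpower_Kfun_exp_double p t :
  Rpower (Kfun (exp (2 * t))) (- (p * (1 - p))) = Rpower (cosh t) (2 * (1 - p) * ((1 - p) - 1)).
Proof.
  rewrite Kfun_exp_double. unfold Rpower. rewrite ln_pow by apply cosh_pos.
  f_equal. simpl. ring.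
Qed.

Lemma Ghat_WYD_bounds_exp_double p t : t <> 0 ->
  (0 <= p <= 1 / 2 ->
     Rpower (cosh t) (2 * (1 - p) * (1 - p - 1)) * WYD p (exp (2 * t)) <= Ghat p (exp (2 * t))) /\
  (p <= 0 \/ p >= 1 ->
     Ghat p (exp (2 * t)) <= Rpower (cosh t) (2 * (1 - p) * (1 - p - 1)) * WYD p (exp (2 * t))).
Proof.
  intros Ht.
  destruct (Req_dec p 0) as [-> | Hp0].
  { rewrite Ghat_0_eq_WYD_0. replace (2 * (1 - 0) * (1 - 0 - 1)) with 0 by ring.
    rewrite Rpower_O by apply cosh_pos. lra. }
  destruct (Req_dec p 1) as [-> | Hp1].
  { replace (2 * (1 - 1) * (1 - 1 - 1)) with 0 by ring.
    rewrite Rpower_O by apply cosh_pos. pose proof (Ghat_1_le_WYD_1_exp_double t Ht). lra. }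
  rewrite Ghat_eq_sinh_ratio_mul_WYD by assumption.
  pose proof (WYD_exp_double_pos p t Ht Hp0 Hp1).
  split; intros Hp; apply Rmult_le_compat_r; try lra.
  - apply Rpower_cosh_le_sinh_ratio; [assumption | lra].
  - apply sinh_ratio_le_Rpower_cosh; [assumption | lra].
Qed.

Theorem theorem3p3 (x p : R) (hx : 0 < x) :
  (0 <= p <= 1 / 2 ->
     Ghat p x >= Rpower (Kfun x) (- (p * (1 - p))) * WYD p x) /\
  (p <= 0 \/ p >= 1 ->
     Ghat p x <= Rpower (Kfun x) (- (p * (1 - p))) * WYD p x).
Proof.
  destruct (Req_dec x 1) as [-> | Hx1].
  { unfold Ghat, WYD, Kfun, Rpower. destruct (Req_EM_T 1 1) as [_ | ]; [| contradiction].
    replace ((1 + 1) ^ 2 / (4 * 1)) with 1 by field.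
    rewrite ln_1, Rmult_0_r, exp_0. lra. }
  set (t := ln x / 2).
  assert (Hx : x = exp (2 * t)) by (unfold t; rewrite <- (exp_ln x hx) at 1; f_equal; field).
  assert (Ht : t <> 0) by (intros H0; apply Hx1; rewrite Hx, H0, Rmult_0_r, exp_0; reflexivity).
  clearbody t. subst x. rewrite Rpower_Kfun_exp_double.
  destruct (Ghat_WYD_bounds_exp_double p t Ht) as [Hlow Hup].
  split; [intros Hp; apply Rle_ge, Hlow, Hp | exact Hup].
Qed.
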